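(* The line graph $L(K_{s,s})$ of the complete bipartite graph $K_{s,s}$ with $s>2$, the Petersen graph, and the Clebsch graph are not $\mathcal{C}$-$\mathrm{MH}$.
   Context: Subgraphs are induced. A homomorphism maps edges to edges; a monomorphism is an injective homomorphism. A graph $G$ is $\mathcal{C}$-$\mathrm{MH}$ if every monomorphism from a finite connected induced subgraph of $G$ into $G$ extends to a homomorphism $G\to G$. $L(K_{s,s})$ has vertex set $\{1,\dots,s\}^2$ with $(u,i)\sim(v,j)$ iff exactly one of $u=v$, $i=j$ holds (distinct vertices sharing a coordinate). The Petersen graph has as vertices the $2$-element subsets of $\{1,\dots,5\}$, adjacent iff disjoint. The Clebsch graph is the graph obtained from the $5$-dimensional cube $Q_5$ by identifying antipodal vertices. *)

From HB Require Import structures.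
From mathcomp Require Import all_boot.
Set Implicit Arguments. Unset Strict Implicit. Unset Printing Implicit Defensive.

(* A graph is a finite type of vertices with a (symmetric, irreflexive) edge relation. *)

Definition is_hom (T : finType) (e : rel T) (g : T -> T) : Prop :=
  forall x y, e x y -> e (g x) (g y).

Definition induced_connected (T : finType) (e : rel T) (A : {set T}) : Prop :=
  {in A &, forall x y, connect [rel u v | [&& u \in A, v \in A & e u v]] x y}.

(* The monomorphism is given by
   a function f : T -> T of which only the values on A matter. *)
Definition CMH (T : finType) (e : rel T) : Prop :=
  forall (A : {set T}) (f : T -> T),
    induced_connected e A ->
    {in A &, injective f} ->
    {in A &, forall x y, e x y -> e (f x) (f y)} ->
    exists g : T -> T, is_hom e g /\ {in A, forall x, g x = f x}.

(* Line graph of K_{s,s}: vertices [s]^2, (u,i) ~ (v,j) iff exactly one of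
   u = v, i = j holds. *)
Definition LKss_rel (s : nat) : rel ('I_s * 'I_s) :=
  fun p q => (p.1 == q.1) (+) (p.2 == q.2).

Definition petersen_vertex := {A : {set 'I_5} | #|A| == 2}.
Definition petersen_rel : rel petersen_vertex :=
  fun A B => [disjoint val A & val B].

(* Clebsch graph: Q_5 with antipodal vertices identified.  Vertices of the
   quotient are the antipodal pairs {x, ~x}; two classes are adjacent iff
   some representatives are adjacent in Q_5. *)
Definition bvec := {ffun 'I_5 -> bool}.
Definition antipode (x : bvec) : bvec := [ffun i => ~~ x i].
Definition cube_rel : rel bvec := fun x y => #|[set i | x i != y i]| == 1.
Definition clebsch_vertex :=
  {S : {set bvec} | [exists x : bvec, S == [set x; antipode x]]}.
Definition clebsch_rel : rel clebsch_vertex :=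
  fun S U => [exists x in val S, exists y in val U, cube_rel x y].

From mathcomp Require Import all_boot.
Set Implicit Arguments. Unset Strict Implicit. Unset Printing Implicit Defensive.

(* If a monomorphism f from an induced path extends to a homomorphism g, then g
   maps any vertex v to a common neighbour of the images of the neighbours of v
   on the path.  Each of the three graphs contains an induced path, a
   monomorphism f of it into the graph, and a vertex v adjacent to path vertices
   whose images under f have no common neighbour. *)

Section Obstruction.
Variables (T : finType) (e : rel T).

Definition mono_on (f : T -> T) (s : seq T) : bool :=
  allrel (fun x y => ((f x == f y) ==> (x == y)) && (e x y ==> e (f x) (f y))) s s.

Lemma mono_on_inj f s : mono_on f s -> {in s &, injective f}.
Proof.
move=> /allrelP fs x y xs ys /eqP fxy.
by have /andP[/implyP/(_ fxy)/eqP] := fs x y xs ys.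
Qed.

Lemma mono_on_hom f s : mono_on f s -> {in s &, forall x y, e x y -> e (f x) (f y)}.
Proof. by move=> /allrelP fs x y xs ys; have /andP[_ /implyP] := fs x y xs ys. Qed.

Lemma CMH_common_neighbour (A : {set T}) (f : T -> T) (v : T) (B : seq T) :
  CMH e -> induced_connected e A -> {in A &, injective f} ->
  {in A &, forall x y, e x y -> e (f x) (f y)} ->
  {subset B <= A} -> all (e v) B -> exists w, all (e w) (map f B).
Proof.
move=> cmh connA injf homf BA /allP vB.
have [g [homg gf]] := cmh A f connA injf homf.
exists (g v); apply/allP => _ /mapP[x xB ->].
by rewrite -gf ?BA //; apply/homg/vB.
Qed.

Hypothesis e_sym : symmetric e.

Lemma path_induced_connected (x0 : T) (p : seq T) :
  path e x0 p -> induced_connected e [set x in x0 :: p].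
Proof.
set A := [set x in x0 :: p]; set eA := [rel u w | [&& u \in A, w \in A & e u w]].
have memA x : (x \in A) = (x \in x0 :: p) by rewrite inE.
have eA_sym : symmetric eA by move=> x y /=; rewrite e_sym andbCA.
move=> ep; have pA : path eA x0 p.
  apply: (sub_in_path (P := mem A)) ep; last by apply/allP => x; rewrite -memA.
  by move=> x y xA yA exy; rewrite /= xA yA exy.
have x0_conn : {subset x0 :: p <= connect eA x0} by apply: path_connect.
move=> x y; rewrite !memA => xA yA.
apply: (connect_trans (y := x0)); last exact: x0_conn.
by rewrite (sym_connect_sym eA_sym); apply: x0_conn.
Qed.

Lemma not_CMH_of_path (x0 : T) (p : seq T) (f : T -> T) (v : T) (B : seq T) :
  path e x0 p -> mono_on f (x0 :: p) -> {subset B <= x0 :: p} -> all (e v) B ->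
  (forall w, ~~ all (e w) (map f B)) -> ~ CMH e.
Proof.
move=> ep fmono Bp vB noB cmh.
have memA x : (x \in [set x in x0 :: p]) = (x \in x0 :: p) by rewrite inE.
have [|||||w] := @CMH_common_neighbour [set x in x0 :: p] f v B cmh.
- exact: path_induced_connected.
- by move=> x y; rewrite !memA; apply: mono_on_inj.
- by move=> x y; rewrite !memA; apply: mono_on_hom.
- by move=> x /Bp; rewrite memA.
- exact: vB.
- exact/negP/noB.
Qed.

End Obstruction.

Lemma LKss_sym s : symmetric (@LKss_rel s).
Proof. by move=> x y; rewrite /LKss_rel eq_sym [y.2 == _]eq_sym. Qed.

(* The induced path (0,2)-(0,1)-(1,1)-(1,0) is mapped onto the 4-cycle
   (0,1)-(0,0)-(1,0)-(1,1); the vertex (0,0) is adjacent to (0,2), (0,1) and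
   (1,0), whose images (0,1), (0,0), (1,1) have no common neighbour. *)
Lemma LKss_not_CMH s : 2 < s -> ~ CMH (@LKss_rel s).
Proof.
move=> s_gt2.
pose i0 := Ordinal (ltnW (ltnW s_gt2)); pose i1 := Ordinal (ltnW s_gt2).
pose i2 := Ordinal s_gt2.
pose f (x : 'I_s * 'I_s) :=
  if x == (i0, i2) then (i0, i1) else if x == (i0, i1) then (i0, i0)
  else if x == (i1, i1) then (i1, i0) else (i1, i1).
apply: (not_CMH_of_path (@LKss_sym s) (x0 := (i0, i2))
          (p := [:: (i0, i1); (i1, i1); (i1, i0)]) (f := f) (v := (i0, i0))
          (B := [:: (i0, i2); (i0, i1); (i1, i0)])) => //.
- by apply/allP.
move=> [[u lt_us] [i lt_is]]; rewrite /f /LKss_rel /=.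
by case: u lt_us => [|[|u]] ?; case: i lt_is => [|[|i]] ?.
Qed.

Definition o0 : 'I_5 := Ordinal (isT : 0 < 5).
Definition o1 : 'I_5 := Ordinal (isT : 1 < 5).
Definition o2 : 'I_5 := Ordinal (isT : 2 < 5).
Definition o3 : 'I_5 := Ordinal (isT : 3 < 5).
Definition o4 : 'I_5 := Ordinal (isT : 4 < 5).

Lemma cards2_neq (T : finType) (i j : T) : i != j -> #|[set i; j]| == 2.
Proof. by rewrite cards2 => ->. Qed.

Definition pvertex (i j : 'I_5) (ij : i != j) : petersen_vertex :=
  exist (fun A : {set 'I_5} => #|A| == 2) [set i; j] (cards2_neq ij).

Lemma pvertex_eq (i j k l : 'I_5) (ij : i != j) (kl : k != l) :
  (pvertex ij == pvertex kl) = (i == k) && (j == l) || (i == l) && (j == k).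
Proof.
apply/eqP/idP => [/(congr1 val) /= Eij | ]; last first.
  move=> ijkl; apply: val_inj => /=.
  by case/orP: ijkl => /andP[/eqP-> /eqP->]; rewrite // setUC.
have /set2P[] : i \in [set k; l] by rewrite -Eij set21.
all: have /set2P[] : j \in [set k; l] by rewrite -Eij set22.
all: by move: ij => /[swap] -> /[swap] ->; rewrite ?eqxx ?orbT.
Qed.

Lemma petersen_rel_pvertex (i j k l : 'I_5) (ij : i != j) (kl : k != l) :
  petersen_rel (pvertex ij) (pvertex kl) = [&& i != k, i != l, j != k & j != l].
Proof.
rewrite /petersen_rel /= disjoints_subset subUset !sub1set !inE.
by rewrite !negb_or !andbA.
Qed.

Lemma petersen_sym : symmetric petersen_rel.
Proof. by move=> A B; rewrite /petersen_rel disjoint_sym. Qed.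

Definition q01 := @pvertex o0 o1 isT.
Definition q23 := @pvertex o2 o3 isT.
Definition q04 := @pvertex o0 o4 isT.
Definition q12 := @pvertex o1 o2 isT.
Definition q03 := @pvertex o0 o3 isT.
Definition q24 := @pvertex o2 o4 isT.
Definition q34 := @pvertex o3 o4 isT.

Definition petersen_map (A : petersen_vertex) : petersen_vertex :=
  let X := val A in
  if (o2 \in X) && (o3 \in X) then q01
  else if (o0 \in X) && (o4 \in X) then q23
  else if (o1 \in X) && (o2 \in X) then q04
  else if (o0 \in X) && (o3 \in X) then q12
  else q34.

(* The induced path 23-04-12-03-24 is mapped to 01-23-04-12-34; the vertex 01
   is adjacent to 23 and 24, whose images 01 and 34 have no common neighbour:
   it would be a pair avoiding {0,1,3,4}. *)
Lemma petersen_not_CMH : ~ CMH petersen_rel.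
Proof.
apply: (not_CMH_of_path petersen_sym (x0 := q23) (p := [:: q04; q12; q03; q24])
          (f := petersen_map) (v := q01) (B := [:: q23; q24])).
- by rewrite /= !petersen_rel_pvertex.
- rewrite /mono_on /allrel /= /petersen_map /= !inE /=.
  by rewrite !pvertex_eq !petersen_rel_pvertex.
- by apply/allP; rewrite /= !inE !eqxx !orbT.
- by rewrite /= !petersen_rel_pvertex.
move=> [X card_X]; rewrite /petersen_map /= !inE /= andbT /petersen_rel /=.
apply/negP => /andP[disj01 disj34].
have : X \subset [set o2].
  apply/subsetP => i iX; rewrite inE.
  move: (disjointFr disj01 iX) (disjointFr disj34 iX); rewrite !inE.
  by case: i iX => [[|[|[|[|[|?]]]]] ?].
by move/subset_leq_card; rewrite cards1 (eqP card_X).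
Qed.

Definition bv (b0 b1 b2 b3 b4 : bool) : bvec :=
  [ffun i : 'I_5 => nth false [:: b0; b1; b2; b3; b4] i].

Lemma bvE (x : bvec) : x = bv (x o0) (x o1) (x o2) (x o3) (x o4).
Proof.
apply/ffunP => i; rewrite ffunE.
by case: i => [[|[|[|[|[|?]]]]] ?] //=; congr (x _); apply: val_inj.
Qed.

Lemma antipode_bv b0 b1 b2 b3 b4 :
  antipode (bv b0 b1 b2 b3 b4) = bv (~~ b0) (~~ b1) (~~ b2) (~~ b3) (~~ b4).
Proof. by apply/ffunP => i; rewrite !ffunE; case: i => [[|[|[|[|[|?]]]]] ?]. Qed.

Lemma antipodeK : involutive antipode.
Proof. by move=> x; apply/ffunP => i; rewrite !ffunE negbK. Qed.

Lemma bv_eq a0 a1 a2 a3 a4 b0 b1 b2 b3 b4 :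
  (bv a0 a1 a2 a3 a4 == bv b0 b1 b2 b3 b4) =
  [&& a0 == b0, a1 == b1, a2 == b2, a3 == b3 & a4 == b4].
Proof.
apply/eqP/idP => [E | /and5P[/eqP-> /eqP-> /eqP-> /eqP-> /eqP->] //].
have coord i : bv a0 a1 a2 a3 a4 i = bv b0 b1 b2 b3 b4 i by rewrite E.
move: (coord o0) (coord o1) (coord o2) (coord o3) (coord o4).
by rewrite !ffunE /= => -> -> -> -> ->; rewrite !eqxx.
Qed.

Lemma cube_rel_bv a0 a1 a2 a3 a4 b0 b1 b2 b3 b4 :
  cube_rel (bv a0 a1 a2 a3 a4) (bv b0 b1 b2 b3 b4) =
  ((a0 != b0) + (a1 != b1) + (a2 != b2) + (a3 != b3) + (a4 != b4) == 1).
Proof.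
rewrite /cube_rel -sum1dep_card big_mkcond /= !big_ord_recl big_ord0 /= !ffunE /=.
by case: (a0 != b0); case: (a1 != b1); case: (a2 != b2);
  case: (a3 != b3); case: (a4 != b4).
Qed.

Lemma cube_sym : symmetric cube_rel.
Proof.
move=> x y; rewrite /cube_rel.
suff -> : [set i | x i != y i] = [set i | y i != x i] by [].
by apply/setP => i; rewrite !inE eq_sym.
Qed.

Lemma antipodal_pair (x : bvec) :
  [exists y, [set x; antipode x] == [set y; antipode y]].
Proof. by apply/existsP; exists x. Qed.

Definition cvertex (x : bvec) : clebsch_vertex :=
  exist (fun S : {set bvec} => [exists y, S == [set y; antipode y]])
        _ (antipodal_pair x).

Lemma clebsch_vertexP (S : clebsch_vertex) : exists x, S = cvertex x.
Proof.
case: S => X X_pair; have /existsP[x /eqP E] := X_pair.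
by exists x; apply: val_inj.
Qed.

Lemma cvertex_eq x y : (cvertex x == cvertex y) = (x == y) || (x == antipode y).
Proof.
apply/eqP/idP => [/(congr1 val) /= E | /orP[] /eqP->]; last 2 first.
- by [].
- by apply: val_inj; rewrite /= antipodeK setUC.
by rewrite -in_set2 -E set21.
Qed.

Lemma exists_set2 (T : finType) (a b : T) (P : pred T) :
  [exists x in [set a; b], P x] = P a || P b.
Proof.
apply/existsP/orP => [[x /andP[/set2P[] -> Px]] | [Pa | Pb]]; [by left | by right | |].
- by exists a; rewrite set21.
- by exists b; rewrite set22.
Qed.

Lemma clebsch_rel_cvertex x y : clebsch_rel (cvertex x) (cvertex y) =
  [|| cube_rel x y, cube_rel x (antipode y),
      cube_rel (antipode x) y | cube_rel (antipode x) (antipode y)].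
Proof. by rewrite /clebsch_rel /= !exists_set2 !orbA. Qed.

Lemma clebsch_sym : symmetric clebsch_rel.
Proof.
move=> S U; have [x ->] := clebsch_vertexP S; have [y ->] := clebsch_vertexP U.
rewrite !clebsch_rel_cvertex ![cube_rel y _]cube_sym ![cube_rel (antipode y) _]cube_sym.
by case: (cube_rel x y); case: (cube_rel x (antipode y));
  case: (cube_rel (antipode x) y).
Qed.

Definition w0 := bv false false false false false.
Definition w1 := bv true false false false false.
Definition w2 := bv true true false false false.
Definition w3 := bv true true true false false.
Definition w4 := bv true true true true false.
Definition d1 := bv false true false false false.

Definition clebsch_map (S : clebsch_vertex) : clebsch_vertex :=
  if w1 \in val S then cvertex w0
  else if w2 \in val S then cvertex w1
  else if w3 \in val S then cvertex w2
  else cvertex d1.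

(* The induced path w1-w2-w3-w4 is mapped to w0-w1-w2-d1; the vertex w0 is
   adjacent to w1 and to w4 (a neighbour of its antipode), whose images w0 and
   d1 are adjacent, hence have no common neighbour in the triangle-free Clebsch
   graph. *)
Lemma clebsch_not_CMH : ~ CMH clebsch_rel.
Proof.
apply: (not_CMH_of_path clebsch_sym (x0 := cvertex w1)
          (p := [:: cvertex w2; cvertex w3; cvertex w4])
          (f := clebsch_map) (v := cvertex w0) (B := [:: cvertex w1; cvertex w4])).
- by rewrite /= !clebsch_rel_cvertex !antipode_bv !cube_rel_bv.
- rewrite /mono_on /allrel /= /clebsch_map /= !inE !antipode_bv !bv_eq /=.
  by rewrite !cvertex_eq !clebsch_rel_cvertex !antipode_bv !bv_eq !cube_rel_bv.
- by apply/allP; rewrite /= !inE !eqxx !orbT.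
- by rewrite /= !clebsch_rel_cvertex !antipode_bv !cube_rel_bv.
move=> w; have [z ->] := clebsch_vertexP w.
rewrite /clebsch_map /= !inE !antipode_bv !bv_eq /= andbT !clebsch_rel_cvertex.
rewrite (bvE z) !antipode_bv !cube_rel_bv.
by case: (z o0); case: (z o1); case: (z o2); case: (z o3); case: (z o4).
Qed.

Theorem lemma7p1 :
  (forall s : nat, 2 < s -> ~ CMH (@LKss_rel s)) /\
  ~ CMH petersen_rel /\
  ~ CMH clebsch_rel.
Proof.
split; first exact: LKss_not_CMH.
by split; [exact: petersen_not_CMH | exact: clebsch_not_CMH].
Qed.
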